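(* Let $S$ be a set of $n\ge 3$ points in the plane in general position (no four points of $S$ cocircular, no three collinear), and assume $n$ is odd. Then the reduced Euler characteristic of the Voronoi poset of $S$ vanishes: $$\tilde\chi(\Pi(S)) := \sum_{i=-1}^{n-1}(-1)^i \bar f_i = 0,$$ where $\bar f_i$ is the number of elements of $\Pi(S)$ of cardinality $i+1$.
   Context: For points $x,y$ in the plane let $h(x,y)=\{p\in\mathbb{R}^2 : d(x,p)\le d(y,p)\}$. For $A\subseteq S$ let $V(A)=\bigcap_{x\in A,\,y\in S\setminus A} h(x,y)$ (equal to $\mathbb{R}^2$ when $A=\emptyset$). The Voronoi poset $\Pi(S)$ is the set of all subsets $A\subseteq S$ (of any size $0\le|A|\le n$) with $V(A)\ne\emptyset$, ordered by inclusion (with points identified with labels in $[n]$). Thus $\bar f_{-1}=1$ (the empty set) and, for $1\le k\le n$, $\bar f_{k-1}$ equals the number of regions of the $k$-th order Voronoi diagram. *)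

From HB Require Import structures.
From mathcomp Require Import all_boot all_order all_algebra.
From mathcomp Require Import boolp reals.
Set Implicit Arguments. Unset Strict Implicit. Unset Printing Implicit Defensive.
Import Order.TTheory GRing.Theory Num.Theory.
Local Open Scope ring_scope.

Definition pt (R : realType) := (R * R)%type.

Definition dist (R : realType) (x p : pt R) : R :=
  Num.sqrt ((x.1 - p.1) ^+ 2 + (x.2 - p.2) ^+ 2).

Definition halfplane (R : realType) (x y : pt R) (p : pt R) : Prop :=
  dist x p <= dist y p.

(* The point configuration S = {P 0, ..., P (n-1)}, labelled by [n].
   V(A) <> empty  iff  some point p lies in h(P x, P y) for all x in A, y notin A. *)
Definition voronoi_nonempty (R : realType) (n : nat) (P : 'I_n -> pt R)
    (A : {set 'I_n}) : Prop :=
  exists p : pt R, forall x y : 'I_n, x \in A -> y \notin A -> halfplane (P x) (P y) p.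

Definition collinear (R : realType) (p q r : pt R) : Prop :=
  exists a b c : R, (a != 0 \/ b != 0) /\
    a * p.1 + b * p.2 = c /\ a * q.1 + b * q.2 = c /\ a * r.1 + b * r.2 = c.

Definition cocircular (R : realType) (p q r s : pt R) : Prop :=
  exists (c : pt R) (rad : R), 0 < rad /\
    dist p c = rad /\ dist q c = rad /\ dist r c = rad /\ dist s c = rad.

Definition general_position (R : realType) (n : nat) (P : 'I_n -> pt R) : Prop :=
  (forall i j k : 'I_n, i != j -> i != k -> j != k -> ~ collinear (P i) (P j) (P k)) /\
  (forall i j k l : 'I_n, uniq [:: i; j; k; l] ->
      ~ cocircular (P i) (P j) (P k) (P l)).

(* fbar_{k-1} = number of elements of the Voronoi poset Pi(S) of cardinality k. *)
Definition fbar (R : realType) (n : nat) (P : 'I_n -> pt R) (k : nat) : nat :=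
  #|[set A : {set 'I_n} | `[< voronoi_nonempty P A >] && (#|A| == k)]|.

(* Reduced Euler characteristic  sum_{i=-1}^{n-1} (-1)^i fbar_i ,
   reindexed by k = i+1 in 0..n, using (-1)^(k-1) = (-1)^(k+1). *)
Definition red_euler_char (R : realType) (n : nat) (P : 'I_n -> pt R) : int :=
  \sum_(k < n.+1) (-1) ^+ k.+1 * (fbar P k)%:Z.

From HB Require Import structures.
From mathcomp Require Import all_boot all_order all_algebra.
From mathcomp Require Import boolp reals.
From mathcomp Require Import ring lra zify.
Import Order.TTheory GRing.Theory Num.Theory.
Local Open Scope ring_scope.

Set Implicit Arguments.
Unset Strict Implicit.
Unset Printing Implicit Defensive.

(* Each cell V(A) is a convex polygon, cut out by the inequalities
   power(P x, q) <= power(P y, q) for x in A and y outside A, which are affine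
   in q.  Fix a direction c in general position and count the nonempty cells
   with sign (-1)^|A|.  A cell either contains a ray along which c decreases,
   or has a unique c-lowest point q, found by the simplex method.  In the
   second case exactly three sites are cocircular around q, and toggling them
   in A gives the cell whose (-c)-lowest point is q; this bijection reverses
   the sign.  Complementation maps the cells of the first kind for c to those
   for -c, and also reverses the sign because n is odd.  Hence the signed count
   computed with -c is the opposite of the one computed with c, but it does not
   depend on c, so it vanishes. *)

Section Plane.
Variable R : realType.
Implicit Types (t : R) (u v q : R * R).

Definition dot u v : R := u.1 * v.1 + u.2 * v.2.
Definition cross u v : R := u.1 * v.2 - u.2 * v.1.
Definition addv u v : R * R := (u.1 + v.1, u.2 + v.2).
Definition subv u v : R * R := (u.1 - v.1, u.2 - v.2).
Definition scalev t u : R * R := (t * u.1, t * u.2).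
Definition oppv u : R * R := (- u.1, - u.2).
Definition perp u : R * R := (u.2, - u.1).

(* [power x q = |x - q|^2 - |q|^2]: it orders the sites by distance to [q]
   exactly as [dist] does, and it is affine in [q]. *)
Definition power (x : R * R) q : R := x.1 ^+ 2 + x.2 ^+ 2 - 2 * dot x q.

Lemma sqdist_power (x : R * R) q :
  (x.1 - q.1) ^+ 2 + (x.2 - q.2) ^+ 2 = power x q + dot q q.
Proof. rewrite /power /dot; ring. Qed.

Lemma halfplaneE (x y : R * R) q : halfplane x y q <-> power x q <= power y q.
Proof.
have dE z : dist z q = Num.sqrt (power z q + dot q q) by rewrite /dist sqdist_power.
have ge0 z : 0 <= power z q + dot q q by rewrite -sqdist_power addr_ge0 ?sqr_ge0.
by rewrite /halfplane !dE ler_sqrt ?ge0 //; split=> h; lra.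
Qed.

Lemma dist_eq0 (x : R * R) q : dist x q = 0 -> x = q.
Proof.
rewrite /dist => /eqP; rewrite sqrtr_eq0 => h.
have [h1 h2] := (sqr_ge0 (x.1 - q.1), sqr_ge0 (x.2 - q.2)).
have /eqP : (x.1 - q.1) ^+ 2 = 0 by lra.
have /eqP : (x.2 - q.2) ^+ 2 = 0 by lra.
rewrite !sqrf_eq0 !subr_eq0 => /eqP e2 /eqP e1.
by case: x q e1 e2 {h h1 h2} => ? ? [? ?] /= -> ->.
Qed.

Lemma addv_subv q q' : addv q (subv q' q) = q'.
Proof. by case: q q' => a b [a' b']; rewrite /addv /subv /=; congr pair; ring. Qed.

Lemma addv_scale0 q u : addv q (scalev 0 u) = q.
Proof. by case: q => a b; rewrite /addv /scalev /= !mul0r !addr0. Qed.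

Lemma dot_scalevl t u v : dot (scalev t u) v = t * dot u v.
Proof. rewrite /dot /scalev /=; ring. Qed.

Lemma dot_scalevr t u v : dot u (scalev t v) = t * dot u v.
Proof. rewrite /dot /scalev /=; ring. Qed.

Lemma dot_addvr u q v : dot u (addv q v) = dot u q + dot u v.
Proof. rewrite /dot /addv /=; ring. Qed.

Lemma dot_oppvl u v : dot (oppv u) v = - dot u v.
Proof. rewrite /dot /oppv /=; ring. Qed.

Lemma dot_oppvr u v : dot u (oppv v) = - dot u v.
Proof. rewrite /dot /oppv /=; ring. Qed.

Lemma dot_perpr u v : dot u (perp v) = cross u v.
Proof. rewrite /dot /cross /perp /=; ring. Qed.

Lemma dot_perpl u v : dot (perp u) v = - cross u v.
Proof. rewrite /dot /cross /perp /=; ring. Qed.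

Lemma cross_oppvl u v : cross (oppv u) v = - cross u v.
Proof. rewrite /cross /oppv /=; ring. Qed.

Lemma crossC u v : cross u v = - cross v u.
Proof. rewrite /cross; ring. Qed.

Lemma crossvv u : cross u u = 0.
Proof. rewrite /cross; ring. Qed.

Lemma oppvK : involutive oppv.
Proof. by case=> a b; rewrite /oppv /= !opprK. Qed.

Lemma oppv_eq0 u : (oppv u == (0, 0)) = (u == (0, 0)).
Proof. by case: u => a b; rewrite /oppv !xpair_eqE !oppr_eq0. Qed.

Lemma dot_self_gt0 u : u != (0, 0) -> 0 < dot u u.
Proof.
case: u => a b; rewrite xpair_eqE negb_and /dot /= -!expr2 => /orP h.
have sq_gt0 (z : R) : z != 0 -> 0 < z ^+ 2 by move=> hz; rewrite exprn_even_gt0 ?hz ?orbT.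
have [ha hb] := (sqr_ge0 a, sqr_ge0 b).
by case: h => /sq_gt0; lra.
Qed.

Lemma perp_eq0 u : (perp u == (0, 0)) = (u == (0, 0)).
Proof. by case: u => a b; rewrite /perp !xpair_eqE oppr_eq0 andbC. Qed.

Lemma dot_basis_eq0 a b v :
  cross a b != 0 -> dot v a = 0 -> dot v b = 0 -> v = (0, 0).
Proof.
move=> hab ha hb.
have e1 : cross a b * v.1 = b.2 * dot v a - a.2 * dot v b by rewrite /cross /dot; ring.
have e2 : cross a b * v.2 = a.1 * dot v b - b.1 * dot v a by rewrite /cross /dot; ring.
move: e1 e2; rewrite ha hb !mulr0 subr0 => /eqP + /eqP.
rewrite !mulf_eq0 (negbTE hab) /= => /eqP e1 /eqP e2.
by case: v e1 e2 {ha hb} => ? ? /= -> ->.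
Qed.

Section Voronoi.
Variables (n : nat) (P : 'I_n -> pt R).
Hypothesis P_inj : injective P.
Hypothesis P_gen : general_position P.
Implicit Types (A B T : {set 'I_n}) (i j x y : 'I_n).

Definition normal x y : R * R := subv (P x) (P y).

Definition in_cell A q :=
  forall x y, x \in A -> y \notin A -> power (P x) q <= power (P y) q.

Definition tight A q x y :=
  [/\ x \in A, y \notin A & power (P x) q = power (P y) q].

Definition level q m : {set 'I_n} := [set i | power (P i) q == m].

Lemma normal_eq0 x y : (normal x y == (0, 0)) = (x == y).
Proof.
apply/eqP/eqP => [|->]; last by rewrite /normal /subv !subrr.
rewrite /normal /subv => -[/eqP + /eqP]; rewrite !subr_eq0 => /eqP e1 /eqP e2.
by apply: P_inj; rewrite [P x]surjective_pairing [P y]surjective_pairing e1 e2.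
Qed.

Lemma voronoi_nonemptyE A : voronoi_nonempty P A <-> exists q, in_cell A q.
Proof.
by split=> -[q hq]; exists q => x y hx hy; apply/halfplaneE; apply: hq.
Qed.

Lemma mem_neq A x y : x \in A -> y \notin A -> x != y.
Proof. by move=> hx; apply: contraNneq => <-. Qed.

Lemma power_dot_normal u q x y :
  power (P y) (addv q u) - power (P x) (addv q u)
  = power (P y) q - power (P x) q + 2 * dot u (normal x y).
Proof. rewrite /power /dot /addv /normal /subv /=; ring. Qed.

Lemma card_level_le3 q m : (#|level q m| <= 3)%N.
Proof.
rewrite leqNgt; apply/negP => gt3.
have [i iL] : exists i, i \in level q m by apply/card_gt0P; apply: leq_trans gt3.
have : (2 < #|level q m :\ i|)%N by rewrite (cardsD1 i) iL in gt3.
case/card_gt2P => j [k [l [[jL kL lL] [njk nkl nlj]]]].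
move: jL kL lL iL; rewrite !inE => /andP [nji /eqP ej] /andP [nki /eqP ek]
  /andP [nli /eqP el] /eqP ei.
have hu : uniq [:: i; j; k; l].
  by rewrite /= !inE !negb_or ![i == _]eq_sym nji nki nli njk eq_sym nlj nkl.
apply: (P_gen.2 i j k l hu); exists q, (Num.sqrt (m + dot q q)).
have dE z : power (P z) q = m -> dist (P z) q = Num.sqrt (m + dot q q).
  by move=> hz; rewrite /dist sqdist_power hz.
rewrite !dE //; split=> //; rewrite lt_neqAle sqrtr_ge0 andbT eq_sym.
apply: contra nji => /eqP h0; apply/eqP; apply: P_inj.
have at_q z : power (P z) q = m -> P z = q by move=> hz; apply: dist_eq0; rewrite dE.
by rewrite (at_q j ej) (at_q i ei).
Qed.

Lemma tight_level A q x0 y0 x y : in_cell A q -> tight A q x0 y0 -> tight A q x y ->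
  power (P x) q = power (P x0) q /\ power (P y) q = power (P x0) q.
Proof.
move=> hV [hx0 hy0 e0] [hx hy e].
by have := hV _ _ hx hy0; have := hV _ _ hx0 hy; lra.
Qed.

Definition tight_pairs A q := [set k : 'I_n * 'I_n | `[< tight A q k.1 k.2 >]].

(* The tight pairs of a cell point all lie at one power level [L], and pair a
   label of [L :&: A] with one of [L :\: A]; since [#|L| <= 3], there are at
   most [1 * 2] of them. *)
Lemma card_tight_pairs_le2 A q : in_cell A q -> (#|tight_pairs A q| <= 2)%N.
Proof.
move=> hV; case: (posnP #|tight_pairs A q|) => [-> //|].
case/card_gt0P => -[x0 y0]; rewrite inE => /asboolP t0.
set L := level q (power (P x0) q).
have sub : tight_pairs A q \subset setX (L :&: A) (L :\: A).
  apply/subsetP => -[x y]; rewrite !inE /= => /asboolP t.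
  have [-> ->] := tight_level hV t0 t; case: t => -> -> _.
  by rewrite !eqxx.
apply: leq_trans (subset_leq_card sub) _.
have := card_level_le3 q (power (P x0) q); rewrite cardsX -/L -(cardsID A L).
by move: #|_| #|_| => a b; nia.
Qed.

Lemma tight_move A q x y u : tight A q x y -> dot u (normal x y) = 0 ->
  tight A (addv q u) x y.
Proof.
by case=> hx hy e hd; split=> //; have := power_dot_normal u q x y; rewrite hd e; lra.
Qed.

Lemma tight_move_dot A q x y u :
  tight A q x y -> tight A (addv q u) x y -> dot u (normal x y) = 0.
Proof.
by case=> _ _ e1 [_ _ e2]; have := power_dot_normal u q x y; rewrite e1 e2; lra.
Qed.

Definition in_recession A u :=
  forall x y, x \in A -> y \notin A -> 0 <= dot u (normal x y).

(* Ray shooting: either the whole ray from [q] in direction [e] stays in the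
   cell, or it first leaves through the wall with the least exit time [ratio]. *)
Lemma cell_ray A q e : in_cell A q ->
  in_recession A e \/
  exists t x y, let q' := addv q (scalev t e) in
    [/\ 0 <= t, in_cell A q', dot e (normal x y) < 0 & tight A q' x y].
Proof.
move=> hV.
pose K (k : 'I_n * 'I_n) := [&& k.1 \in A, k.2 \notin A & dot e (normal k.1 k.2) < 0].
case: (pickP K) => [k0 hk0|noK]; last first.
  left=> x y hx hy; have := noK (x, y); rewrite /K /= hx hy /= => /negbT.
  by rewrite -leNgt.
right.
pose ratio (k : 'I_n * 'I_n) :=
  (power (P k.2) q - power (P k.1) q) / (-2 * dot e (normal k.1 k.2)).
case: (arg_minP ratio hk0) => -[x0 y0] /and3P [hx0 hy0 hk] tmin.
set t := ratio (x0, y0); rewrite /= in hk.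
have Dk : 0 < -2 * dot e (normal x0 y0) by lra.
have ht : t * (-2 * dot e (normal x0 y0)) = power (P y0) q - power (P x0) q.
  by rewrite /t /ratio divfK // gt_eqF.
have t0 : 0 <= t by rewrite /t /ratio divr_ge0 ?(ltW Dk) // subr_ge0 hV.
exists t, x0, y0; split=> //; last first.
  by split=> //; have := power_dot_normal (scalev t e) q x0 y0; rewrite dot_scalevl; lra.
move=> x y hx hy.
have := power_dot_normal (scalev t e) q x y; rewrite dot_scalevl.
have := hV _ _ hx hy.
case: (leP 0 (dot e (normal x y))) => hd.
  by have := mulr_ge0 t0 hd; lra.
have /tmin : K (x, y) by rewrite /K /= hx hy hd.
rewrite -/t /ratio /= ler_pdivlMr; last by lra.
by lra.
Qed.

Lemma no_three_tight_pairs A q x1 y1 x2 y2 x3 y3 : in_cell A q ->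
  tight A q x1 y1 -> tight A q x2 y2 -> tight A q x3 y3 ->
  (x1, y1) != (x2, y2) -> (x2, y2) != (x3, y3) -> (x3, y3) != (x1, y1) -> False.
Proof.
move=> hV t1 t2 t3 n12 n23 n31.
have : (2 < #|tight_pairs A q|)%N.
  by apply/card_gt2P; exists (x1, y1), (x2, y2), (x3, y3); rewrite !inE !asboolT.
by rewrite ltnNge card_tight_pairs_le2.
Qed.

Definition descends c A := exists u, dot c u < 0 /\ in_recession A u.

Definition feasible_dir A q v :=
  forall x y, tight A q x y -> 0 <= dot v (normal x y).

(* First-order optimality: [c] increases strictly along every feasible direction
   at [q]; by convexity of the cell, [q] is then its unique [c]-minimiser. *)
Definition cell_argmin c A q :=
  in_cell A q /\ forall v, v != (0, 0) -> feasible_dir A q v -> 0 < dot c v.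

Definition vertex A q x1 y1 x2 y2 :=
  [/\ in_cell A q, tight A q x1 y1, tight A q x2 y2 &
      cross (normal x1 y1) (normal x2 y2) != 0].

Lemma vertex_uniq A q q' x1 y1 x2 y2 :
  vertex A q x1 y1 x2 y2 -> vertex A q' x1 y1 x2 y2 -> q = q'.
Proof.
case=> _ a1 a2 hc [_ b1 b2 _].
rewrite -(addv_subv q q') in b1 b2.
have := dot_basis_eq0 hc (tight_move_dot a1 b1) (tight_move_dot a2 b2).
by case: q q' {a1 a2 b1 b2} => a b [a' b'] [/eqP + /eqP]; rewrite !subr_eq0 => /eqP -> /eqP ->.
Qed.

Definition generic_dir c := forall x y, x != y -> cross c (normal x y) != 0.

Section Walk.
Variable c : R * R.
Hypothesis c_generic : generic_dir c.
Hypothesis c_neq0 : c != (0, 0).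

(* Descend along [-c] to a wall, then along that wall to a second one. *)
Lemma reach_vertex A q : in_cell A q ->
  descends c A \/ exists q' x1 y1 x2 y2, vertex A q' x1 y1 x2 y2.
Proof.
move=> hV.
have dc : dot c (oppv c) < 0 by rewrite dot_oppvr oppr_lt0 dot_self_gt0.
case: (cell_ray (oppv c) hV) => [hrec|[t [x1 [y1 [_ hV1 _ t1]]]]].
  by left; exists (oppv c).
set q1 := addv q _ in hV1 t1.
set n1 := normal x1 y1.
have cn1 : cross c n1 != 0 by case: t1 => hx1 hy1 _; apply/c_generic/(mem_neq hx1 hy1).
set e := scalev (- cross c n1) (perp n1).
have dce : dot c e < 0.
  by rewrite dot_scalevr dot_perpr mulNr oppr_lt0 -expr2 exprn_even_gt0 ?cn1.
case: (cell_ray e hV1) => [hrec|[t' [x2 [y2 [_ hV2 d2 t2]]]]].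
  by left; exists e.
right; exists (addv q1 (scalev t' e)), x1, y1, x2, y2; split=> //.
  by apply: tight_move; rewrite // dot_scalevl dot_scalevl dot_perpl crossvv !(oppr0, mulr0).
move: d2; rewrite dot_scalevl dot_perpl mulrN mulNr opprK.
by apply: contraTneq => ->; rewrite mulr0 ltxx.
Qed.

Lemma vertex_argmin A q x1 y1 x2 y2 : vertex A q x1 y1 x2 y2 ->
  let D := cross (normal x1 y1) (normal x2 y2) in
  0 < cross c (normal x2 y2) * D -> 0 < cross (normal x1 y1) c * D ->
  cell_argmin c A q.
Proof.
case=> hV t1 t2 hD /= ha hb; split=> // v hv hfeas.
have [d1 d2] := (hfeas _ _ t1, hfeas _ _ t2).
move: ha hb hD d1 d2; set n1 := normal x1 y1; set n2 := normal x2 y2.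
set D := cross n1 n2 => ha hb hD d1 d2.
have E : D ^+ 2 * dot c v = (cross c n2 * D) * dot v n1 + (cross n1 c * D) * dot v n2.
  by rewrite /D /cross /dot; ring.
have : 0 < dot v n1 \/ 0 < dot v n2.
  case: (ltrP 0 (dot v n1)) => h1; first by left.
  case: (ltrP 0 (dot v n2)) => h2; first by right.
  by move: hv; rewrite (@dot_basis_eq0 n1 n2 v) ?eqxx //; lra.
have D2 : 0 < D ^+ 2 by rewrite exprn_even_gt0 ?hD.
rewrite -(pmulr_rgt0 (dot c v) D2) E => -[h|h].
  by have := mulr_gt0 ha h; have := mulr_ge0 (ltW hb) d2; lra.
by have := mulr_gt0 hb h; have := mulr_ge0 (ltW ha) d1; lra.
Qed.

(* Pivot along the edge that keeps the wall of [(x2, y2)] and leaves that of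
   [(x1, y1)]; the sign hypothesis says this edge descends. *)
Lemma vertex_pivot A q x1 y1 x2 y2 : vertex A q x1 y1 x2 y2 ->
  cross c (normal x2 y2) * cross (normal x1 y1) (normal x2 y2) < 0 ->
  descends c A \/ exists q' x3 y3, vertex A q' x2 y2 x3 y3 /\ dot c q' < dot c q.
Proof.
case=> hV t1 t2 hD; set n1 := normal x1 y1 in hD *; set n2 := normal x2 y2 in hD *.
set D := cross n1 n2 in hD * => hl.
set e := scalev D (perp n2).
have de1 : dot e n1 = D ^+ 2 by rewrite dot_scalevl dot_perpl -crossC.
have de2 : dot e n2 = 0 by rewrite dot_scalevl dot_perpl crossvv oppr0 mulr0.
have dce : dot c e < 0 by rewrite dot_scalevr dot_perpr mulrC.
case: (cell_ray e hV) => [hrec|[t [x3 [y3 [t0 hV3 d3 t3]]]]].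
  by left; exists e.
right; have [tz|tp] := eqVneq t 0.
  exfalso; move: hV3 t3; rewrite tz addv_scale0 => _ t3.
  apply: (no_three_tight_pairs hV t1 t2 t3).
  - by apply: contra hD => /eqP [e1 e2]; rewrite /D /n1 /n2 e1 e2 crossvv.
  - by apply: contraTneq d3 => -[<- <-]; rewrite -/n2 de2 ltxx.
  - apply: contraTneq d3 => -[-> ->]; rewrite -/n1 de1 -leNgt.
    exact: sqr_ge0.
exists (addv q (scalev t e)), x3, y3; split; first split=> //.
- by apply: tight_move; rewrite // dot_scalevl de2 mulr0.
- move: d3; rewrite dot_scalevl dot_perpl mulrN.
  by apply: contraTneq => ->; rewrite mulr0 oppr0 ltxx.
- rewrite dot_addvr dot_scalevr gtrDl pmulr_rlt0 //.
  by rewrite lt_neqAle eq_sym tp.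
Qed.

Definition lower_vertices A q :=
  [set k : ('I_n * 'I_n) * ('I_n * 'I_n) |
    `[< exists q', vertex A q' k.1.1 k.1.2 k.2.1 k.2.2 /\ dot c q' < dot c q >]].

Lemma card_lower_vertices_lt A q q' x1 y1 x2 y2 :
  vertex A q' x1 y1 x2 y2 -> dot c q' < dot c q ->
  (#|lower_vertices A q'| < #|lower_vertices A q|)%N.
Proof.
move=> hv hlt; apply/proper_card/properP; split.
  apply/subsetP => k; rewrite !inE => /asboolP [q'' [hv' hlt']].
  by apply/asboolP; exists q''; split=> //; lra.
exists ((x1, y1), (x2, y2)); rewrite !inE; first by apply/asboolP; exists q'.
by apply/negP => /asboolP [q'' [/(vertex_uniq hv) <-]]; rewrite ltxx.
Qed.

Lemma vertex_progress A q x1 y1 x2 y2 : vertex A q x1 y1 x2 y2 ->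
  [\/ descends c A, cell_argmin c A q |
      exists q' x3 y3 x4 y4, vertex A q' x3 y3 x4 y4 /\ dot c q' < dot c q].
Proof.
move=> hv; have [hV t1 t2 hD] := hv.
have [c1 c2] : cross c (normal x1 y1) != 0 /\ cross c (normal x2 y2) != 0.
  case: t1 t2 => hx1 hy1 _ [hx2 hy2 _].
  by split; apply: c_generic; [apply: (mem_neq hx1 hy1) | apply: (mem_neq hx2 hy2)].
have [ha|ha] := ltrP (cross c (normal x2 y2) * cross (normal x1 y1) (normal x2 y2)) 0.
  case: (vertex_pivot hv ha) => [|[q' [x3 [y3 [hv' hl]]]]]; first by constructor 1.
  by constructor 3; exists q', x2, y2, x3, y3.
have hv21 : vertex A q x2 y2 x1 y1 by split; rewrite // crossC oppr_eq0.
have [hb|hb] := ltrP (cross c (normal x1 y1) * cross (normal x2 y2) (normal x1 y1)) 0.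
  case: (vertex_pivot hv21 hb) => [|[q' [x3 [y3 [hv' hl]]]]]; first by constructor 1.
  by constructor 3; exists q', x1, y1, x3, y3.
constructor 2; apply: (vertex_argmin hv).
  by rewrite lt_neqAle ha eq_sym mulf_neq0.
move: hb; rewrite [cross (normal x2 _) _]crossC [cross c _]crossC mulrNN => hb.
by rewrite lt_neqAle hb eq_sym mulf_neq0 // -oppr_eq0 -crossC.
Qed.

(* The simplex method: each pivot strictly lowers [c], hence the number of
   vertices below the current one. *)
Lemma descends_or_argmin A : (exists q, in_cell A q) ->
  descends c A \/ exists q, cell_argmin c A q.
Proof.
case=> q /reach_vertex [|[q' [x1 [y1 [x2 [y2 hv]]]]]]; first by left.
move: {2}#|_| (erefl #|lower_vertices A q'|) => k.
elim/ltn_ind: k q' x1 y1 x2 y2 hv {q} => k IH q x1 y1 x2 y2 hv Hk.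
case: (vertex_progress hv) => [||[q' [x3 [y3 [x4 [y4 [hv' hl]]]]]]].
- by left.
- by right; exists q.
apply: (IH _ _ q' x3 y3 x4 y4 hv' erefl).
by rewrite -Hk; apply: card_lower_vertices_lt hv' hl.
Qed.

End Walk.

Lemma argmin_not_descends c A q : cell_argmin c A q -> ~ descends c A.
Proof.
case=> _ hmin [u [hu hrec]].
have u0 : u != (0, 0) by apply: contraTneq hu => ->; rewrite /dot /= !mulr0 addr0 ltxx.
by have := hmin u u0 (fun x y '(And3 hx hy _) => hrec x y hx hy); lra.
Qed.

Lemma argmin_tight c A q : c != (0, 0) -> cell_argmin c A q ->
  exists x y, tight A q x y.
Proof.
move=> c0 [_ hmin]; apply: contrapT => notight.
have feas : feasible_dir A q (oppv c) by move=> x y t; case: notight; exists x, y.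
have := hmin _ _ feas; rewrite oppv_eq0 dot_oppvr oppr_gt0 => /(_ c0).
by rewrite ltNge le_eqVlt dot_self_gt0 ?orbT.
Qed.

Lemma argmin_lt c A q q' : cell_argmin c A q -> in_cell A q' -> q' != q ->
  dot c q < dot c q'.
Proof.
move=> [hV hmin] hV' neq.
have v0 : subv q' q != (0, 0).
  apply: contra neq; case: q q' {hV hV' hmin} => a b [a' b'].
  by rewrite /subv !xpair_eqE !subr_eq0.
have /(hmin _ v0) : feasible_dir A q (subv q' q).
  move=> x y [hx hy e]; have := power_dot_normal (subv q' q) q x y.
  by rewrite addv_subv e; have := hV' _ _ hx hy; lra.
by rewrite -{2}(addv_subv q q') dot_addvr; lra.
Qed.

Lemma argmin_uniq c A q q' : cell_argmin c A q -> cell_argmin c A q' -> q = q'.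
Proof.
move=> h h'; case: (eqVneq q q') => // neq.
have lt1 := argmin_lt h (proj1 h') (contra_neq esym neq).
have lt2 := argmin_lt h' (proj1 h) neq.
by have := lt_trans lt1 lt2; rewrite ltxx.
Qed.

Lemma dot_normal u x y : dot u (normal x y) = dot u (P x) - dot u (P y).
Proof. rewrite /dot /normal /subv /=; ring. Qed.

(* A line [dot u p = const] carries at most two sites, so at most one
   separating pair sits on a wall parallel to the recession direction [u]. *)
Lemma recession_wall_uniq A u a b x y : u != (0, 0) -> in_recession A u ->
  a \in A -> b \notin A -> x \in A -> y \notin A ->
  dot u (normal a b) = 0 -> dot u (normal x y) = 0 -> x = a /\ y = b.
Proof.
move=> u0 hrec ha hb hx hy e1 e2.
have := hrec _ _ hx hb; have := hrec _ _ ha hy; move: e1 e2; rewrite !dot_normal.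
set d := dot u (P a) => e1 e2 h1 h2.
have on_line i j k : dot u (P i) = d -> dot u (P j) = d -> dot u (P k) = d ->
    collinear (P i) (P j) (P k).
  move=> hi hj hk; exists u.1, u.2, d; split=> //; apply/orP.
  apply: contraR u0; rewrite negb_or !negbK => /andP [/eqP u1 /eqP u2].
  by rewrite [u]surjective_pairing u1 u2.
have [db dx dy] : [/\ dot u (P b) = d, dot u (P x) = d & dot u (P y) = d] by split; lra.
have nab := mem_neq ha hb.
split; apply/eqP; apply: contraT => neq; exfalso.
  by apply: (P_gen.1 a b x) => //; [rewrite eq_sym | rewrite eq_sym (mem_neq hx hb) | apply: on_line].
by apply: (P_gen.1 a b y) => //; [apply: mem_neq ha hy | rewrite eq_sym | apply: on_line].
Qed.

(* Go far along [u] from a point where the (at most one) wall parallel to [u]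
   is tight. *)
Lemma recession_nonempty A u : u != (0, 0) -> in_recession A u ->
  exists q, in_cell A q.
Proof.
move=> u0 hrec.
have [base tight_base] : exists base, forall x y, x \in A -> y \notin A ->
    dot u (normal x y) = 0 -> power (P x) base = power (P y) base.
  case: (pselect (exists a b, [/\ a \in A, b \notin A & dot u (normal a b) = 0]));
    last by move=> none; exists (0, 0) => x y hx hy hxy; case: none; exists x, y.
  move=> [a [b [ha hb hab]]].
  exists (((P a).1 + (P b).1) / 2, ((P a).2 + (P b).2) / 2) => x y hx hy hxy.
  have [-> ->] := recession_wall_uniq u0 hrec ha hb hx hy hab hxy.
  by rewrite /power /dot /=; field.
pose time (k : 'I_n * 'I_n) := if 0 < dot u (normal k.1 k.2) then
  `|power (P k.1) base - power (P k.2) base| / (2 * dot u (normal k.1 k.2)) else 0.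
have time_ge0 k : 0 <= time k.
  by rewrite /time; case: ifP => // h; rewrite divr_ge0 //; lra.
set t := \sum_k time k.
have time_le k : time k <= t by rewrite /t (bigD1 k) //= lerDl sumr_ge0.
exists (addv base (scalev t u)) => x y hx hy.
have := power_dot_normal (scalev t u) base x y; rewrite dot_scalevl.
have := hrec _ _ hx hy; rewrite le_eqVlt => /orP [/eqP h0|hp].
  by rewrite -h0 (tight_base x y hx hy (esym h0)); lra.
have := time_le (x, y); rewrite /time /= hp ler_pdivrMr; last by lra.
by have := ler_norm (power (P x) base - power (P y) base); lra.
Qed.

Lemma descends_nonempty c A : descends c A -> exists q, in_cell A q.
Proof.
case=> u [hu hrec]; apply: (recession_nonempty _ hrec).
by apply: contraTneq hu => ->; rewrite /dot /= !mulr0 addr0 ltxx.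
Qed.

Definition tie A q : {set 'I_n} :=
  [set i | [exists j, `[< tight A q i j >] || `[< tight A q j i >]]].

Lemma tie_level A q x0 y0 : in_cell A q -> tight A q x0 y0 ->
  tie A q = level q (power (P x0) q).
Proof.
move=> hV t0; have [hx0 hy0 e0] := t0; apply/setP => i; rewrite !inE.
apply/existsP/eqP => [[j /orP [] /asboolP t]|e].
- by have [] := tight_level hV t0 t.
- by have [] := tight_level hV t0 t.
have [iA|iA] := boolP (i \in A).
  by exists y0; apply/orP; left; apply/asboolP; split; rewrite // e e0.
by exists x0; apply/orP; right; apply/asboolP; split; rewrite // e.
Qed.

(* If only one wall [(x0, y0)] were tight at the argmin, both directions along
   it would be feasible, and [c] cannot increase along both; so a fourth label
   is impossible by cocircularity and a third one is forced. *)
Lemma card_tie c A q : c != (0, 0) -> cell_argmin c A q -> #|tie A q| = 3.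
Proof.
move=> c0 hmin; have [x0 [y0 t0]] := argmin_tight c0 hmin.
have [hV hfeas] := hmin; have [hx0 hy0 e0] := t0.
rewrite (tie_level hV t0); set L := level _ _.
have x0L : x0 \in L by rewrite inE.
have y0L : y0 \in L by rewrite inE e0.
have nxy := mem_neq hx0 hy0.
have sub2 : [set x0; y0] \subset L by apply/subsetP => z /set2P [] ->.
have := card_level_le3 q (power (P x0) q); rewrite -/L.
have := subset_leq_card sub2; rewrite cards2 nxy.
suff : #|L| != 2 by case: #|L| => [|[|[|[|]]]].
apply: contraT; rewrite negbK => /eqP cardL.
have EL : L = [set x0; y0] by apply/esym/eqP; rewrite eqEcard sub2 cardL cards2 nxy.
have only_wall x y : tight A q x y -> x = x0 /\ y = y0.
  move=> t; have [ex ey] := tight_level hV t0 t; case: t => hx hy _.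
  have : x \in L by rewrite inE ex.
  rewrite EL !inE (negbTE (mem_neq hx hy0)) orbF => /eqP ->.
  have : y \in L by rewrite inE ey.
  by rewrite EL !inE [y == x0]eq_sym (negbTE (mem_neq hx0 hy)) => /eqP ->.
set w := perp (normal x0 y0).
have w0 : w != (0, 0) by rewrite perp_eq0 normal_eq0.
have along_wall v : dot v (normal x0 y0) = 0 -> feasible_dir A q v.
  by move=> hv x y /only_wall [-> ->]; rewrite hv.
have dw : dot w (normal x0 y0) = 0 by rewrite dot_perpl crossvv oppr0.
have dw' : dot (oppv w) (normal x0 y0) = 0 by rewrite dot_oppvl dw oppr0.
have := hfeas _ w0 (along_wall _ dw).
by have := hfeas (oppv w) _ (along_wall _ dw'); rewrite oppv_eq0 dot_oppvr => /(_ w0); lra.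
Qed.

Definition symdiff A T := (A :\: T) :|: (T :\: A).

Lemma symdiffK A T : symdiff (symdiff A T) T = A.
Proof. by apply/setP => i; rewrite !inE; case: (i \in A); case: (i \in T). Qed.

Definition flip A q := symdiff A (tie A q).

Section Flip.
Variables (A : {set 'I_n}) (q : R * R) (x0 y0 : 'I_n).
Hypotheses (hV : in_cell A q) (t0 : tight A q x0 y0).
Let m := power (P x0) q.

Lemma mem_flip i :
  (i \in flip A q) = (power (P i) q < m) || ((power (P i) q == m) && (i \notin A)).
Proof.
have [hx0 hy0 e0] := t0.
rewrite /flip /symdiff (tie_level hV t0) !inE -/m.
case: ltgtP => h /=; rewrite ?andbT ?andbF ?orbF //.
  by apply: contraTT h => hi; rewrite -leNgt; apply: hV hx0 hi.
by apply/negbTE; apply: contraTN h => hi; rewrite -leNgt /m e0; apply: hV hi hy0.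
Qed.

Lemma tight_flip x y : tight (flip A q) q x y <-> tight A q y x.
Proof.
split.
  case; rewrite !mem_flip negb_or negb_and negbK -leNgt => + /andP [hy1 hy2] e.
  case/orP => [hx|/andP [/eqP hx hxA]]; first by lra.
  by move: hy2; rewrite -e hx eqxx /= => hyA; split.
case=> hy hx e; have [l1 l2] := tight_level hV t0 (And3 hy hx e).
by split; rewrite ?mem_flip -/m ?l1 ?l2 ?ltxx ?eqxx ?hy ?hx.
Qed.

Lemma in_cell_flip : in_cell (flip A q) q.
Proof.
move=> x y; rewrite !mem_flip negb_or negb_and negbK -leNgt => + /andP [hy1 hy2].
by case/orP => [hx|/andP [/eqP -> _]]; lra.
Qed.

Lemma flipK : flip (flip A q) q = A.
Proof.
have t0' : tight (flip A q) q y0 x0 by apply/tight_flip.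
have [_ _ e0] := t0.
by rewrite {1}/flip (tie_level in_cell_flip t0') /flip (tie_level hV t0) -e0 symdiffK.
Qed.

Lemma argmin_flip c : cell_argmin c A q -> cell_argmin (oppv c) (flip A q) q.
Proof.
case=> _ hmin; split=> [|v v0 hfeas]; first exact: in_cell_flip.
rewrite dot_oppvl -dot_oppvr; apply: hmin; first by rewrite oppv_eq0.
move=> x y /tight_flip /hfeas; rewrite dot_oppvl /normal /dot /subv /=; lra.
Qed.

End Flip.

Definition sgn A : int := (-1) ^+ #|A|.

Definition signed_sum (X : {set 'I_n} -> Prop) : int :=
  \sum_A (if `[< X A >] then sgn A else 0).

Lemma sgn_oddD A B : odd (#|A| + #|B|) -> sgn B = - sgn A.
Proof.
rewrite /sgn -signr_odd -(signr_odd _ #|A|) oddD.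
by case: (odd _); case: (odd _).
Qed.

Lemma odd_card_symdiff A T : odd #|symdiff A T| = odd #|A| (+) odd #|T|.
Proof.
have disj : (A :\: T) :&: (T :\: A) = set0.
  by apply/setP => i; rewrite !inE; case: (i \in A); case: (i \in T).
rewrite /symdiff cardsU disj cards0 subn0 -(cardsID T A) -(cardsID A T) setIC !oddD.
by case: (odd _); case: (odd _); case: (odd _).
Qed.

Lemma sgn_setC A : odd n -> sgn (~: A) = - sgn A.
Proof. by move=> n_odd; apply: sgn_oddD; rewrite cardsC card_ord. Qed.

Definition has_argmin c A := exists q, cell_argmin c A q.

Definition flips c A B := exists q, cell_argmin c A q /\ B = flip A q.

Lemma flips_sym c A B : c != (0, 0) -> flips c A B -> flips (oppv c) B A.
Proof.
move=> c0 [q [hmin ->]]; have [x0 [y0 t0]] := argmin_tight c0 hmin.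
have [hV _] := hmin.
by exists q; split; [apply: argmin_flip hV t0 c hmin | rewrite (flipK hV t0)].
Qed.

Lemma flips_fun c A B B' : flips c A B -> flips c A B' -> B = B'.
Proof. by move=> [q [h ->]] [q' [h' ->]]; rewrite (argmin_uniq h h'). Qed.

Lemma sgn_flips c A B : c != (0, 0) -> flips c A B -> sgn B = - sgn A.
Proof.
move=> c0 [q [hmin ->]]; apply: sgn_oddD.
by rewrite oddD odd_card_symdiff (card_tie c0 hmin) addbA addbb.
Qed.

Lemma sum_flips c (g : {set 'I_n} -> int) :
  \sum_A (if `[< has_argmin c A >] then g A else 0) =
  \sum_A \sum_B (if `[< flips c A B >] then g A else 0).
Proof.
apply: eq_bigr => A _; case: asboolP => [[q hq]|none]; last first.
  by rewrite big1 // => B _; case: asboolP => // -[q [hq _]]; case: none; exists q.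
have hB : flips c A (flip A q) by exists q.
rewrite (bigD1 (flip A q)) //= (asboolT hB) big1 ?addr0 // => B neq.
by case: asboolP => // hB'; move: neq; rewrite (flips_fun hB' hB) eqxx.
Qed.

(* The flip at the [c]-minimum of a cell, through the three sites cocircular
   there, is a sign-reversing bijection onto the cells with a [-c]-minimum. *)
Lemma sum_argmin_opp c : c != (0, 0) ->
  signed_sum (has_argmin c) = - signed_sum (has_argmin (oppv c)).
Proof.
move=> c0; rewrite /signed_sum !sum_flips exchange_big /= -sumrN.
apply: eq_bigr => B _; rewrite -sumrN; apply: eq_bigr => A _.
case: asboolP => h1; case: asboolP => h2; rewrite ?oppr0 //.
- by rewrite (sgn_flips c0 h1) opprK.
- by case: h2; apply: flips_sym.
- by case: h1; rewrite -[c]oppvK; apply: flips_sym; rewrite ?oppv_eq0.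
Qed.

Lemma descends_setC c A : descends c A -> descends (oppv c) (~: A).
Proof.
case=> u [hu hrec]; exists (oppv u); split; first by rewrite dot_oppvl dot_oppvr opprK.
move=> x y; rewrite !inE negbK => hx hy.
by have := hrec _ _ hy hx; rewrite dot_oppvl /dot /normal /subv /=; lra.
Qed.

Lemma sum_descends_opp c : odd n ->
  signed_sum (descends (oppv c)) = - signed_sum (descends c).
Proof.
move=> n_odd; rewrite /signed_sum (reindex_inj (@setC_inj _)) /= -sumrN.
apply: eq_bigr => A _; case: asboolP => h1; case: asboolP => h2; rewrite ?oppr0 //.
- by rewrite sgn_setC.
- by case: h2; rewrite -[c]oppvK -[A]setCK; apply: descends_setC.
- by case: h1; apply: descends_setC.
Qed.

Lemma sum_cells_split c : generic_dir c -> c != (0, 0) ->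
  signed_sum (voronoi_nonempty P) = signed_sum (descends c) + signed_sum (has_argmin c).
Proof.
move=> c_gen c0; rewrite /signed_sum -big_split; apply: eq_bigr => A _ /=.
have [ne|empty] := asboolP (voronoi_nonempty P A).
  case: (descends_or_argmin c_gen c0 (proj1 (voronoi_nonemptyE A) ne)) => [hd|hm].
    by rewrite asboolT // asboolF ?addr0 // => -[q /argmin_not_descends].
  by case: hm => q hq; rewrite asboolF ?add0r ?asboolT //; [exists q | apply: argmin_not_descends hq].
have noncell : ~ exists q, in_cell A q by move/voronoi_nonemptyE.
rewrite !asboolF ?addr0 // => [[q [hq _]]|/descends_nonempty //].
by apply: noncell; exists q.
Qed.

Lemma generic_dir_opp c : generic_dir c -> generic_dir (oppv c).
Proof. by move=> c_gen x y /c_gen; rewrite cross_oppvl oppr_eq0. Qed.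

(* [c = (1, t)] with [t] larger than every slope [|v.2 / v.1|] of a normal. *)
Lemma exists_generic_dir : exists c, c != (0, 0) /\ generic_dir c.
Proof.
pose slope x y := `|(normal x y).2 / (normal x y).1|.
set t := 1 + \sum_(k : 'I_n * 'I_n) slope k.1 k.2.
have slope_lt x y : slope x y < t.
  rewrite /t (bigD1 (x, y)) //=.
  have : 0 <= \sum_(k | k != (x, y)) slope k.1 k.2.
    by apply: sumr_ge0 => k _; apply: normr_ge0.
  lra.
exists (1, t); split; first by rewrite xpair_eqE oner_eq0.
move=> x y neq; have := slope_lt x y; rewrite /slope.
have : normal x y != (0, 0) by rewrite normal_eq0.
move: (normal x y) => v v0 slope_v; rewrite /cross /= mul1r subr_eq0.
have [v1|v1] := eqVneq v.1 0.
  rewrite v1 mulr0; apply: contra v0 => /eqP v2.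
  by apply/eqP; move: v1 v2; case: (v) => a b /= -> ->.
by apply: contraTneq slope_v => ->; rewrite mulfK // ltNge ler_norm.
Qed.

Lemma red_euler_charE : red_euler_char P = - signed_sum (voronoi_nonempty P).
Proof.
rewrite /red_euler_char /signed_sum /fbar -sumrN.
under eq_bigr => k _ do rewrite -natz mulr_natr -sumr_const big_mkcond /=.
rewrite exchange_big /=; apply: eq_bigr => A _.
have cardA : (#|A| < n.+1)%N by rewrite ltnS -[leqRHS]card_ord max_card.
rewrite (bigD1 (Ordinal cardA)) //= big1 => [|k /negbTE neq]; last first.
  have : #|A| != k by apply: contraFN neq => /eqP e; apply/eqP/val_inj.
  by rewrite inE => /negbTE ->; rewrite andbF.
by rewrite inE eqxx andbT addr0 /sgn exprS mulN1r; case: asboolP; rewrite ?oppr0.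
Qed.

End Voronoi.
End Plane.

Theorem mainTheorem9 (R : realType) (n : nat) (P : 'I_n -> pt R) :
  injective P -> (3 <= n)%N -> odd n -> general_position P ->
  red_euler_char P = 0.
Proof.
move=> P_inj _ n_odd P_gen.
have [c [c0 c_gen]] := exists_generic_dir P_inj.
have c0' : oppv c != (0, 0) by rewrite oppv_eq0.
have split_c := sum_cells_split P_inj P_gen c_gen c0.
have split_oppc := sum_cells_split P_inj P_gen (generic_dir_opp c_gen) c0'.
have descends_opp := sum_descends_opp P c n_odd.
have argmin_opp := sum_argmin_opp P_inj P_gen c0.
rewrite red_euler_charE; lra.
Qed.
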